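(* Let $p$ be a prime and let $k,N$ be positive integers. For any positive integer $n\geq N$, \[ \sum_{i=0}^{\varphi(p^N)-1}B^{(-k)}_{n+i}\equiv \sum_{i=0}^{\varphi(p^N)-1}B^{(-n-i)}_{k}\equiv 0\pmod{p^N}. \]
   Context: For any integer $k$, let $\mathrm{Li}_k(t)=\sum_{n=1}^{\infty} t^n/n^k$. The poly-Bernoulli numbers $B^{(k)}_n$ ($n\ge 0$) are defined by $\frac{\mathrm{Li}_k(1-e^{-t})}{1-e^{-t}}=\sum_{n=0}^{\infty}B^{(k)}_n\frac{t^n}{n!}$. For negative upper index these are integers. $\varphi$ denotes Euler's totient function, so $\varphi(p^N)=p^{N-1}(p-1)$. *)

From HB Require Import structures.
From mathcomp Require Import all_boot all_order all_algebra.
Set Implicit Arguments. Unset Strict Implicit. Unset Printing Implicit Defensive.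
Import Order.TTheory GRing.Theory Num.Theory.
Local Open Scope ring_scope.

(* Truncation of e^{-t} = \sum_j (-1)^j t^j / j! to degree <= n, as a polynomial over rat. *)
Definition expm_trunc (n : nat) : {poly rat} :=
  \poly_(j < n.+1) ((-1) ^+ j / (j`!)%:R).

(* Poly-Bernoulli number with negative upper index: polyBern_neg k n = B_n^{(-k)}.
   Generating function: Li_{-k}(x)/x = \sum_{m>=0} (m+1)^k x^m with x = 1 - e^{-t}.
   Since x has no constant term, the coefficient of t^n only involves m <= n and
   the terms of e^{-t} of degree <= n; so
     B_n^{(-k)} = n! * [t^n] \sum_{m=0}^{n} (m+1)^k (1 - e^{-t})^m
   computed exactly with the truncation above. *)
Definition polyBern_neg (k n : nat) : rat :=
  (n`!)%:R * (\sum_(m < n.+1) ((m.+1)%:R ^+ k) *: (1 - expm_trunc n) ^+ m)`_n.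

(* Write x = 1 - e^{-t}, so that n! [t^n] x^m = fdiff m n and
   B_n^(-k) = \sum_m (m+1)^k fdiff m n.  Expanding (m+1)^k in the binomial
   basis 'C(m, j) and summing fdiff against that basis gives Kaneko's formula
   B_n^(-k) = \sum_j j!^2 S(k+1, j+1) S(n+1, j+1), which is symmetric in n
   and k.  Hence both sums equal \sum_m fdiff m k \sum_i (m+1)^(n+i), and each
   term is divisible by p^N: if p | m+1, because N <= n; if p divides neither m
   nor m+1, because (m+1)^phi(p^N) = 1 mod p^N and m is a unit; if p | m > 0,
   because p | m! | fdiff m k while a geometric sum of phi(p^N) = (p-1) p^(N-1)
   powers of a base = 1 mod p is divisible by p^(N-1). *)

From HB Require Import structures.
From mathcomp Require Import all_boot all_order all_algebra.
From mathcomp Require Import cyclic.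
From mathcomp Require Import ring.
Set Implicit Arguments. Unset Strict Implicit.
Import Order.TTheory GRing.Theory Num.Theory.
Local Open Scope ring_scope.

Lemma big_nat_widen0 {R : nmodType} {F : nat -> R} {m n : nat} : (m <= n)%N ->
  (forall i, (m <= i < n)%N -> F i = 0) ->
  \sum_(0 <= i < m) F i = \sum_(0 <= i < n) F i.
Proof.
move=> le_mn F0; rewrite [RHS](big_cat_nat (leq0n m) le_mn) /=.
by rewrite [X in _ + X]big1_seq ?addr0 // => i /andP[_]; rewrite mem_index_iota => /F0.
Qed.

Lemma natr_mul_bin_diag (R : pzSemiRingType) m j :
  j.+1%:R * 'C(m.+1, j.+1)%:R = m.+1%:R * 'C(m, j)%:R :> R.
Proof. by rewrite -!natrM -mul_bin_diag. Qed.

(* [fdiff m n = n! [t^n] (1 - e^{-t})^m = (-1)^(m+n) m! S(n, m)]. *)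
Definition fdiff (m n : nat) : int :=
  \sum_(0 <= l < m.+1) (-1) ^+ l * 'C(m, l)%:R * (- l%:R) ^+ n.

Lemma fdiffm0 m : fdiff m 0 = (m == 0%N)%:R.
Proof.
rewrite /fdiff big_mkord -expr0n -[0 in RHS](addNr (1 : int)) exprD1n.
by apply: eq_bigr => l _; rewrite expr0 mulr1 mulr_natr.
Qed.

Lemma fdiff0S n : fdiff 0 n.+1 = 0.
Proof. by rewrite /fdiff big_nat1 oppr0 expr0n mulr0. Qed.

Lemma fdiffSS m n : fdiff m.+1 n.+1 = m.+1%:R * (fdiff m n - fdiff m.+1 n).
Proof.
have -> : fdiff m n - fdiff m.+1 n =
    \sum_(0 <= j < m.+1) (-1) ^+ j * 'C(m, j)%:R * (- j.+1%:R) ^+ n.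
  rewrite /fdiff (big_nat_widen0 (leqnSn m.+1)) => [|i /andP[lti _]]; last first.
    by rewrite bin_small ?mulr0 ?mul0r.
  rewrite big_nat_recl // [X in _ - X]big_nat_recl // !bin0 opprD addrACA subrr add0r.
  rewrite -sumrB; apply: eq_bigr => j _; rewrite binS natrD exprS; ring.
rewrite /fdiff big_nat_recl // oppr0 expr0n mulr0 add0r mulr_sumr.
apply: eq_bigr => j _.
transitivity ((-1) ^+ j * (j.+1%:R * 'C(m.+1, j.+1)%:R) * (- j.+1%:R) ^+ n :> int).
  by rewrite exprS exprSr; ring.
by rewrite natr_mul_bin_diag; ring.
Qed.

Lemma fdiff_small m n : (n < m)%N -> fdiff m n = 0.
Proof.
elim: n m => [|n IHn] [|m] // lt_nm; first by rewrite fdiffm0.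
by rewrite fdiffSS !IHn ?subrr ?mulr0 // ltnW.
Qed.

Lemma dvdz_fact_fdiff m n : (m`!%:R %| fdiff m n)%Z.
Proof.
elim: n m => [|n IHn] [|m]; rewrite ?fdiffm0 ?dvdz1 ?dvdz0 ?fdiff0S ?dvdz0 //.
rewrite fdiffSS factS natrM dvdz_mul // rpredB //.
by apply: dvdz_trans (IHn m.+1); rewrite factS natrM dvdz_mull.
Qed.

(* [stirf n j = j! S(n+1, j+1)]. *)
Fixpoint stirf (n j : nat) : int :=
  if n is n'.+1 then j.+1%:R * stirf n' j + j%:R * stirf n' j.-1
  else (j == 0%N)%:R.

Lemma stirf_small n j : (n < j)%N -> stirf n j = 0.
Proof.
elim: n j => [|n IHn] [|j] //= lt_nj.
by rewrite !IHn ?mulr0 ?addr0 // ltnW.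
Qed.

Lemma natr_exp_stirf m k :
  m.+1%:R ^+ k = \sum_(0 <= j < m.+1) 'C(m, j)%:R * stirf k j :> int.
Proof.
elim: k => [|k IHk].
  by rewrite big_nat_recl // big1 => [|j _]; rewrite ?bin0 ?mulr0 ?mulr1 ?addr0.
rewrite exprS IHk mulr_sumr /=.
under [RHS]eq_bigr do rewrite mulrDr.
rewrite big_split /= [X in _ + X]big_nat_recl // mul0r mulr0 add0r.
rewrite [X in _ + X](big_nat_widen0 (leqnSn m)) => [|j /andP[le_mj _]]; last first.
  by rewrite bin_small ?mul0r.
rewrite -big_split; apply: eq_bigr => j _ /=.
transitivity (j.+1%:R * 'C(m.+1, j.+1)%:R * stirf k j).
  by rewrite natr_mul_bin_diag; ring.
by rewrite binS natrD; ring.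
Qed.

Lemma sum_bin_fdiff n j :
  \sum_(0 <= m < n.+1) 'C(m, j)%:R * fdiff m n = stirf n j.
Proof.
elim: n j => [|n IHn] j.
  by rewrite big_nat1 fdiffm0 mulr1; case: j.
rewrite /= -!IHn big_nat_recl // fdiff0S mulr0 add0r.
have shift : \sum_(0 <= i < n.+1) 'C(i.+1, j)%:R * i.+1%:R * fdiff i.+1 n =
             \sum_(0 <= i < n.+1) 'C(i, j)%:R * i%:R * fdiff i n.
  rewrite [RHS](big_nat_widen0 (leqnSn n.+1)) => [|i /andP[lt_ni _]]; last first.
    by rewrite fdiff_small ?mulr0.
  by rewrite [RHS]big_nat_recl // mulr0 mul0r add0r.
transitivity (\sum_(0 <= i < n.+1)
    ('C(i.+1, j)%:R * i.+1%:R - 'C(i, j)%:R * i%:R) * fdiff i n).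
  under [RHS]eq_bigr do rewrite mulrBl.
  by rewrite sumrB -shift -sumrB; apply: eq_bigr => i _; rewrite fdiffSS; ring.
rewrite !mulr_sumr -big_split; apply: eq_bigr => i _ /=.
case: j {shift} => [|j]; first by rewrite !bin0; ring.
transitivity (('C(i, j.+1)%:R + j.+1%:R * 'C(i.+1, j.+1)%:R) * fdiff i n).
  by rewrite natr_mul_bin_diag binS natrD; ring.
by rewrite binS natrD; ring.
Qed.

Definition pbern (k n : nat) : int :=
  \sum_(0 <= m < n.+1) m.+1%:R ^+ k * fdiff m n.

Lemma pbern_stirf k n :
  pbern k n = \sum_(0 <= j < n.+1) stirf k j * stirf n j.
Proof.
transitivity (\sum_(0 <= m < n.+1) \sum_(0 <= j < n.+1)
                'C(m, j)%:R * stirf k j * fdiff m n).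
  apply: eq_big_nat => m /andP[_ lt_mn]; rewrite natr_exp_stirf mulr_suml.
  rewrite (big_nat_widen0 lt_mn) // => j /andP[lt_mj _].
  by rewrite bin_small ?mul0r.
rewrite exchange_big; apply: eq_bigr => j _.
by rewrite -(sum_bin_fdiff n j) mulr_sumr; apply: eq_bigr => m _; ring.
Qed.

Lemma pbernC k n : pbern k n = pbern n k.
Proof.
have le_n : (n.+1 <= (n + k).+1)%N by rewrite ltnS leq_addr.
have le_k : (k.+1 <= (n + k).+1)%N by rewrite ltnS leq_addl.
rewrite !pbern_stirf (big_nat_widen0 le_n) => [|j /andP[lt_nj _]]; last first.
  by rewrite (stirf_small lt_nj) ?mulr0.
rewrite [RHS](big_nat_widen0 le_k) => [|j /andP[lt_kj _]]; last first.
  by rewrite (stirf_small lt_kj) ?mulr0.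
by apply: eq_bigr => j _; rewrite mulrC.
Qed.

Lemma coef_expm_trunc_exp n l a : (a <= n)%N ->
  a`!%:R * ((expm_trunc n) ^+ l)`_a = (- l%:R) ^+ a :> rat.
Proof.
elim: l a => [|l IHl] a le_an.
  by rewrite expr0 coef1 oppr0 expr0n; case: a {le_an} => [|a]; rewrite ?mulr1 ?mulr0.
rewrite exprSr coefM mulr_sumr -nat1r opprD exprDn.
apply: eq_bigr => -[j lt_ja] _ /=.
have le_ja : (j <= a)%N by rewrite -ltnS.
have coefE : (expm_trunc n)`_(a - j) = (-1) ^+ (a - j) / (a - j)`!%:R.
  by rewrite coef_poly ltnS (leq_trans (leq_subr _ _) le_an).
have nz_fact : (a - j)`!%:R != 0 :> rat by rewrite pnatr_eq0 -lt0n fact_gt0.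
rewrite coefE -(bin_fact le_ja) !natrM -(IHl j (leq_trans le_ja le_an)).
by rewrite -[in RHS]mulr_natr; field.
Qed.

Lemma coef_subr_expm_trunc_exp m n :
  n`!%:R * ((1 - expm_trunc n) ^+ m)`_n = (fdiff m n)%:~R :> rat.
Proof.
rewrite addrC -scaleN1r exprD1n coef_sum mulr_sumr rmorph_sum big_mkord.
apply: eq_bigr => -[l lt_lm] _ /=.
rewrite coefMn exprZn coefZ -[_ *+ 'C(m, l)]mulr_natr.
rewrite !rmorphM /= !rmorphXn /= !rmorphN rmorph1 !rmorph_nat.
by rewrite -(coef_expm_trunc_exp l (leqnn n)); ring.
Qed.

Lemma polyBern_negE k n : polyBern_neg k n = (pbern k n)%:~R.
Proof.
rewrite /polyBern_neg coef_sum mulr_sumr rmorph_sum big_mkord.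
apply: eq_bigr => -[m lt_mn] _ /=.
by rewrite coefZ mulrCA coef_subr_expm_trunc_exp rmorphM /= rmorphXn /= rmorph_nat.
Qed.

Lemma sum_expn_mul x a b :
  (\sum_(i < b * a) x ^ i = (\sum_(i < b) x ^ i) * \sum_(j < a) x ^ (b * j))%N.
Proof.
elim: a => [|a IHa]; first by rewrite muln0 !big_ord0 muln0.
rewrite mulnS addnC big_split_ord /= IHa big_ord_recr /= mulnDr; congr (_ + _).
by rewrite big_distrl /=; apply: eq_bigr => i _; rewrite expnD mulnC.
Qed.

Lemma dvdn_sum_expn_mod1 p e x :
  x = 1 %[mod p] -> (p ^ e %| \sum_(i < p ^ e) x ^ i)%N.
Proof.
move=> x_1; elim: e => [|e IHe]; first by rewrite dvd1n.
rewrite expnSr sum_expn_mul dvdn_mul // /dvdn -modn_summ.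
rewrite (eq_bigr (fun _ => 1 %% p)%N) => [|j _]; last first.
  by rewrite -modnXm x_1 modnXm exp1n.
by rewrite sum_nat_const card_ord modnMr.
Qed.

Section TotientSums.

Variables (p N n : nat).
Hypotheses (p_pr : prime p) (N_gt0 : (0 < N)%N) (le_Nn : (N <= n)%N).

Lemma sum_expn_totient_shift b :
  (\sum_(i < totient (p ^ N)) b ^ (n + i) =
     b ^ n * \sum_(i < totient (p ^ N)) b ^ i)%N.
Proof. by rewrite big_distrr; apply: eq_bigr => i _; rewrite expnD. Qed.

Lemma dvdn_sum_expn_totient m : ~~ (p %| m)%N ->
  (p ^ N %| \sum_(i < totient (p ^ N)) m.+1 ^ (n + i))%N.
Proof.
move=> p'm; rewrite sum_expn_totient_shift.
have [p_m1 | p'm1] := boolP (p %| m.+1)%N.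
  by rewrite dvdn_mulr // (dvdn_trans (dvdn_exp2r N p_m1)) // dvdn_exp2l.
have pN'm : coprime (p ^ N) m by rewrite coprimeXl // prime_coprime.
have pN'm1 : coprime m.+1 (p ^ N) by rewrite coprime_sym coprimeXl // prime_coprime.
rewrite dvdn_mull // -(Gauss_dvdr _ pN'm) -[m in (m * _)%N]/(m.+1.-1) -predn_exp.
by have /eqP := Euler_exp_totient pN'm1; rewrite eqn_mod_dvd ?expn_gt0 // subn1.
Qed.

Lemma dvdn_sum_expn_totient_mod1 m : (p %| m)%N ->
  (p ^ N.-1 %| \sum_(i < totient (p ^ N)) m.+1 ^ (n + i))%N.
Proof.
move=> p_m; rewrite sum_expn_totient_shift dvdn_mull // totient_pfactor //.
rewrite mulnC sum_expn_mul dvdn_mulr // dvdn_sum_expn_mod1 //.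
by apply/eqP; rewrite eqn_mod_dvd // subn1.
Qed.

Lemma dvdz_fdiff_sum_expn_totient m k : (0 < k)%N ->
  ((p ^ N)%:Z %| fdiff m k * (\sum_(i < totient (p ^ N)) m.+1 ^ (n + i))%:Z)%Z.
Proof.
move=> k_gt0; case: m => [|m].
  by case: k k_gt0 => // k _; rewrite fdiff0S mul0r dvdz0.
have [p_m1 | p'm1] := boolP (p %| m.+1)%N; last first.
  by rewrite dvdz_mull // dvdzE dvdn_sum_expn_totient.
have p_fdiff : (p%:Z %| fdiff m.+1 k)%Z.
  apply: dvdz_trans (dvdz_fact_fdiff m.+1 k).
  by rewrite natz dvdzE dvdn_fact // prime_gt0 // dvdn_leq.
have -> : (p ^ N)%:Z = p%:Z * (p ^ N.-1)%:Z by rewrite -PoszM -expnS prednK.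
by rewrite dvdz_mul // dvdzE dvdn_sum_expn_totient_mod1.
Qed.

Lemma dvdz_sum_pbern k : (0 < k)%N ->
  ((p ^ N)%:Z %| \sum_(i < totient (p ^ N)) pbern (n + i) k)%Z.
Proof.
move=> k_gt0; rewrite exchange_big /=; apply: rpred_sum => m _.
have -> : \sum_(i < totient (p ^ N)) m.+1%:R ^+ (n + i) * fdiff m k =
          fdiff m k * (\sum_(i < totient (p ^ N)) m.+1 ^ (n + i))%N%:Z.
  by rewrite -natz natr_sum mulr_sumr; apply: eq_bigr => i _; rewrite natrX mulrC.
exact: dvdz_fdiff_sum_expn_totient.
Qed.

End TotientSums.

Theorem theorem3p6 (p k N n : nat) :
  prime p -> (0 < k)%N -> (0 < N)%N -> (N <= n)%N ->
  (exists z : int,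
      \sum_(i < totient (p ^ N)) polyBern_neg k (n + i) = z%:~R * (p ^ N)%:R) /\
  (exists z : int,
      \sum_(i < totient (p ^ N)) polyBern_neg (n + i) k = z%:~R * (p ^ N)%:R).
Proof.
move=> p_pr k_gt0 N_gt0 le_Nn.
have [z sumE] := dvdzP (dvdz_sum_pbern p_pr N_gt0 le_Nn k_gt0).
have castE : (\sum_(i < totient (p ^ N)) pbern (n + i) k)%:~R =
             z%:~R * (p ^ N)%:R :> rat by rewrite sumE rmorphM.
split; exists z; rewrite -castE rmorph_sum; apply: eq_bigr => i _.
  by rewrite polyBern_negE pbernC.
by rewrite polyBern_negE.
Qed.
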